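(* For every integer $n$, \[ \sum_{k = (1 + ( - 1)^n )/2}^n ( - 1)^{k - 1} L_k^{\,4} = ( - 1)^{n - 1} \frac{5}{3}F_n F_{n + 1} \left(L_{n - 2} L_{n + 3} + ( - 1)^n 2\right)\,. \] (Here the summation starts at $k=1$ if $n$ is even and at $k=0$ if $n$ is odd.)
   Context: $F_i$ and $L_i$ denote the Fibonacci and Lucas numbers, defined for all $i\in\mathbb{Z}$ by $F_i=F_{i-1}+F_{i-2}$, $F_0=0$, $F_1=1$, and $L_i=L_{i-1}+L_{i-2}$, $L_0=2$, $L_1=1$; equivalently $F_{-i}=(-1)^{i-1}F_i$ and $L_{-i}=(-1)^iL_i$. Summation convention for an arbitrary integer upper limit: $\sum_{k=a}^{a-1} f(k)=0$, and for $n<a-1$, $\sum_{k=a}^{n} f(k) = -\sum_{k=n+1}^{a-1} f(k)$. *)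

From Stdlib Require Import ZArith Reals List.
Open Scope Z_scope.

Fixpoint fib_lucas_nat (n : nat) : Z * Z :=
  match n with
  | O => (0, 1)
  | S m => let (a, b) := fib_lucas_nat m in (b, a + b)
  end.

Definition fibN (n : nat) : Z := fst (fib_lucas_nat n).
Fixpoint lucas_pair (n : nat) : Z * Z :=
  match n with
  | O => (2, 1)
  | S m => let (a, b) := lucas_pair m in (b, a + b)
  end.
Definition lucN (n : nat) : Z := fst (lucas_pair n).

Definition neg1pow (m : Z) : Z := if Z.even m then 1 else -1.

Definition F (i : Z) : Z :=
  if 0 <=? i then fibN (Z.to_nat i)
  else neg1pow (- i - 1) * fibN (Z.to_nat (- i)).
Definition L (i : Z) : Z :=
  if 0 <=? i then lucN (Z.to_nat i)
  else neg1pow (- i) * lucN (Z.to_nat (- i)).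

(* Ordinary sum over a <= k <= b (empty if b < a) *)
Definition sumZ (a b : Z) (f : Z -> R) : R :=
  fold_right Rplus 0%R
    (map (fun i : nat => f (a + Z.of_nat i)) (seq 0 (Z.to_nat (b - a + 1)))).

(* Sum with the paper's convention for arbitrary integer upper limit:
   sum_{k=a}^{n} f k, and for n < a-1 it equals - sum_{k=n+1}^{a-1} f k. *)
Definition gsum (a n : Z) (f : Z -> R) : R :=
  if a <=? n + 1 then sumZ a n f else (- sumZ (n + 1) (a - 1) f)%R.

(* Writing s = (-1)^n, the integer sequence
     P(n) = -5 s F_n F_(n+1) (L_(n-2) L_(n+3) + 2 s) + 24 (1 - s)
   satisfies P(n) - P(n-1) = 3 (-1)^(n-1) L_n^4, so the alternating sum of fourth
   powers telescopes, for negative n as well under the paper's summation convention.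
   The addition formula G_(n+m) = G_(m-1) F_n + G_m F_(n+1) for Fibonacci-like G writes
   every F and L occurring in that difference as an integer combination of u = F_n and
   v = F_(n+1); the identity is then a consequence of Cassini's relation
   v^2 - u v - u^2 = s together with s^2 = 1. *)

From Stdlib Require Import ZArith Reals List Lia Nsatz.
Open Scope Z_scope.

Lemma neg1pow_succ n : neg1pow (n + 1) = - neg1pow n.
Proof. unfold neg1pow. rewrite Z.even_add. now destruct (Z.even n). Qed.

Lemma neg1pow_pred n : neg1pow (n - 1) = - neg1pow n.
Proof. rewrite <- (Z.sub_add 1 n) at 2. rewrite neg1pow_succ. ring. Qed.

Lemma neg1pow_cases n : neg1pow n = 1 \/ neg1pow n = -1.
Proof. unfold neg1pow. destruct (Z.even n); auto. Qed.

Definition fib_like (G : Z -> Z) : Prop := forall n, G (n + 2) = G (n + 1) + G n.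

Lemma fib_like_eq (G H : Z -> Z) :
  fib_like G -> fib_like H -> G 0 = H 0 -> G 1 = H 1 -> forall n, G n = H n.
Proof.
  intros HG HH E0 E1.
  enough (E : forall n, G n = H n /\ G (n + 1) = H (n + 1)) by apply E.
  apply Z.bi_induction; [intros ? ? ->; reflexivity | split; assumption |].
  intros n. specialize (HG n). specialize (HH n). unfold Z.succ.
  replace (n + 1 + 1) with (n + 2) by ring. lia.
Qed.

Lemma fibN_succ_succ m : fibN (S (S m)) = fibN (S m) + fibN m.
Proof. unfold fibN. simpl. destruct (fib_lucas_nat m). simpl. ring. Qed.

Lemma lucN_succ_succ m : lucN (S (S m)) = lucN (S m) + lucN m.
Proof. unfold lucN. simpl. destruct (lucas_pair m). simpl. ring. Qed.

Lemma F_of_nat m : F (Z.of_nat m) = fibN m.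
Proof. unfold F. rewrite (proj2 (Z.leb_le _ _)) by lia. now rewrite Nat2Z.id. Qed.

Lemma L_of_nat m : L (Z.of_nat m) = lucN m.
Proof. unfold L. rewrite (proj2 (Z.leb_le _ _)) by lia. now rewrite Nat2Z.id. Qed.

Lemma F_opp_of_nat m : F (- Z.of_nat (S m)) = neg1pow (Z.of_nat m) * fibN (S m).
Proof.
  unfold F. rewrite (proj2 (Z.leb_gt _ _)) by lia.
  replace (- - Z.of_nat (S m) - 1) with (Z.of_nat m) by lia.
  now rewrite Z.opp_involutive, Nat2Z.id.
Qed.

Lemma L_opp_of_nat m : L (- Z.of_nat (S m)) = - neg1pow (Z.of_nat m) * lucN (S m).
Proof.
  unfold L. rewrite (proj2 (Z.leb_gt _ _)) by lia.
  rewrite Z.opp_involutive, Nat2Z.id, Nat2Z.inj_succ, <- Z.add_1_r.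
  now rewrite neg1pow_succ.
Qed.

Lemma fib_like_F : fib_like F.
Proof.
  intros n. destruct (Z_lt_le_dec n (-2)) as [Hn | Hn].
  - remember (Z.to_nat (- n - 3)) as m.
    replace n with (- Z.of_nat (S (S (S m)))) by lia.
    replace (- Z.of_nat (S (S (S m))) + 2) with (- Z.of_nat (S m)) by lia.
    replace (- Z.of_nat (S (S (S m))) + 1) with (- Z.of_nat (S (S m))) by lia.
    rewrite !F_opp_of_nat, !Nat2Z.inj_succ, <- !Z.add_1_r, !neg1pow_succ.
    rewrite (fibN_succ_succ (S m)). ring.
  - destruct (Z.eq_dec n (-2)) as [-> | ?]; [reflexivity |].
    destruct (Z.eq_dec n (-1)) as [-> | ?]; [reflexivity |].
    remember (Z.to_nat n) as m.
    replace (n + 2) with (Z.of_nat (S (S m))) by lia.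
    replace (n + 1) with (Z.of_nat (S m)) by lia.
    replace n with (Z.of_nat m) by lia.
    rewrite !F_of_nat. apply fibN_succ_succ.
Qed.

Lemma fib_like_L : fib_like L.
Proof.
  intros n. destruct (Z_lt_le_dec n (-2)) as [Hn | Hn].
  - remember (Z.to_nat (- n - 3)) as m.
    replace n with (- Z.of_nat (S (S (S m)))) by lia.
    replace (- Z.of_nat (S (S (S m))) + 2) with (- Z.of_nat (S m)) by lia.
    replace (- Z.of_nat (S (S (S m))) + 1) with (- Z.of_nat (S (S m))) by lia.
    rewrite !L_opp_of_nat, !Nat2Z.inj_succ, <- !Z.add_1_r, !neg1pow_succ.
    rewrite (lucN_succ_succ (S m)). ring.
  - destruct (Z.eq_dec n (-2)) as [-> | ?]; [reflexivity |].
    destruct (Z.eq_dec n (-1)) as [-> | ?]; [reflexivity |].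
    remember (Z.to_nat n) as m.
    replace (n + 2) with (Z.of_nat (S (S m))) by lia.
    replace (n + 1) with (Z.of_nat (S m)) by lia.
    replace n with (Z.of_nat m) by lia.
    rewrite !L_of_nat. apply lucN_succ_succ.
Qed.

Lemma fib_like_add (G : Z -> Z) n m :
  fib_like G -> G (n + m) = G (m - 1) * F n + G m * F (n + 1).
Proof.
  intros HG. revert n.
  apply (fib_like_eq (fun n => G (n + m)) (fun n => G (m - 1) * F n + G m * F (n + 1))).
  - intros n. cbv beta. replace (n + 2 + m) with (n + m + 2) by ring.
    replace (n + 1 + m) with (n + m + 1) by ring. apply HG.
  - intros n. cbv beta. rewrite (fib_like_F n).
    replace (n + 2 + 1) with ((n + 1) + 2) by ring. rewrite (fib_like_F (n + 1)).
    replace (n + 1 + 1) with (n + 2) by ring. rewrite (fib_like_F n). ring.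
  - cbv beta. change (F 0) with 0. change (F (0 + 1)) with 1. rewrite Z.add_0_l. ring.
  - cbv beta. change (F 1) with 1. change (F (1 + 1)) with 1.
    replace (1 + m) with (m - 1 + 2) by ring. rewrite HG.
    replace (m - 1 + 1) with m by ring. ring.
Qed.

Lemma cassini n : F (n + 1) * F (n + 1) - F n * F (n + 1) - F n * F n = neg1pow n.
Proof.
  revert n. apply Z.bi_induction; [intros ? ? ->; reflexivity | reflexivity |].
  intros n. unfold Z.succ. rewrite neg1pow_succ.
  replace (n + 1 + 1) with (n + 2) by ring. rewrite (fib_like_F n). lia.
Qed.

(* Three times the sum from k = 1: the term 24 (1 - s) makes it vanish at n = 0, and its
   value 48 at n = -1 is -3 times the k = 0 term, which the sum includes when n is odd. *)
Definition L4_primitive (n : Z) : Z :=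
  -5 * neg1pow n * F n * F (n + 1) * (L (n - 2) * L (n + 3) + 2 * neg1pow n)
  + 24 * (1 - neg1pow n).

Lemma L4_primitive_diff n :
  L4_primitive n - L4_primitive (n - 1) = 3 * (neg1pow (n - 1) * L n ^ 4).
Proof.
  (* The coefficients are the values G (m - 1), G m in [fib_like_add], checked by computation. *)
  assert (EFm1 : F (n - 1) = -1 * F n + 1 * F (n + 1))
    by exact (fib_like_add F n (-1) fib_like_F).
  assert (ELm3 : L (n - 3) = 7 * F n + -4 * F (n + 1))
    by exact (fib_like_add L n (-3) fib_like_L).
  assert (ELm2 : L (n - 2) = -4 * F n + 3 * F (n + 1))
    by exact (fib_like_add L n (-2) fib_like_L).
  assert (ELn : L n = -1 * F n + 2 * F (n + 1)).
  { rewrite <- (Z.add_0_r n) at 1. exact (fib_like_add L n 0 fib_like_L). }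
  assert (ELp2 : L (n + 2) = 1 * F n + 3 * F (n + 1))
    by exact (fib_like_add L n 2 fib_like_L).
  assert (ELp3 : L (n + 3) = 3 * F n + 4 * F (n + 1))
    by exact (fib_like_add L n 3 fib_like_L).
  unfold L4_primitive. rewrite neg1pow_pred.
  replace (n - 1 + 1) with n by ring.
  replace (n - 1 - 2) with (n - 3) by ring. replace (n - 1 + 3) with (n + 2) by ring.
  replace (L n ^ 4) with (L n * L n * L n * L n) by ring.
  rewrite EFm1, ELm3, ELm2, ELn, ELp2, ELp3.
  pose proof (cassini n) as Hcassini.
  assert (Hsq : neg1pow n * neg1pow n = 1)
    by (destruct (neg1pow_cases n) as [-> | ->]; reflexivity).
  set (u := F n) in *. set (v := F (n + 1)) in *. set (s := neg1pow n) in *.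
  (* Over Z, nsatz cannot discharge a negative constant coefficient in its certificate,
     which is what the other orientation of Hcassini leads to. *)
  symmetry in Hcassini. nsatz.
Qed.

Open Scope R_scope.

Lemma sumZ_telescope (f g : Z -> R) a b :
  (forall k, f k = g k - g (k - 1)%Z) -> (a <= b + 1)%Z -> sumZ a b f = g b - g (a - 1)%Z.
Proof.
  intros Hfg Hab.
  assert (Hlen : forall d a, fold_right Rplus 0 (map (fun i => f (a + Z.of_nat i)%Z) (seq 0 d))
                           = g (a - 1 + Z.of_nat d)%Z - g (a - 1)%Z).
  { induction d as [| d IH]; intros a'; cbn -[Z.of_nat].
    - rewrite Z.add_0_r. ring.
    - rewrite <- seq_shift, map_map.
      rewrite (map_ext _ (fun i => f (a' + 1 + Z.of_nat i)%Z)) by (intros i; f_equal; lia).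
      rewrite IH, Hfg, Z.add_0_r.
      replace (a' + 1 - 1 + Z.of_nat d)%Z with (a' - 1 + Z.of_nat (S d))%Z by lia.
      replace (a' + 1 - 1)%Z with a' by ring. ring. }
  unfold sumZ. rewrite Hlen. f_equal. f_equal. lia.
Qed.

Lemma gsum_telescope (f g : Z -> R) a n :
  (forall k, f k = g k - g (k - 1)%Z) -> gsum a n f = g n - g (a - 1)%Z.
Proof.
  intros Hfg. unfold gsum. destruct (Z.leb_spec a (n + 1)).
  - now apply sumZ_telescope.
  - rewrite (sumZ_telescope f g) by (assumption || lia).
    replace (n + 1 - 1)%Z with n by ring. ring.
Qed.

Theorem corollary4 (n : Z) :
  gsum ((1 + neg1pow n) / 2)%Z n
       (fun k => IZR (neg1pow (k - 1) * L k ^ 4)%Z)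
  = (IZR (neg1pow (n - 1)) * (5 / 3) * IZR (F n) * IZR (F (n + 1))
     * (IZR (L (n - 2) * L (n + 3)) + IZR (neg1pow n) * 2))%R.
Proof.
  rewrite (gsum_telescope _ (fun k => IZR (L4_primitive k) / 3)).
  2: { intros k. rewrite <- Rdiv_minus_distr, <- minus_IZR, L4_primitive_diff, (mult_IZR 3).
       field. }
  unfold L4_primitive at 1. rewrite neg1pow_pred.
  repeat (rewrite plus_IZR || rewrite mult_IZR || rewrite minus_IZR || rewrite opp_IZR).
  destruct (neg1pow_cases n) as [-> | ->].
  - change (L4_primitive ((1 + 1) / 2 - 1)) with 0%Z. field.
  - change (L4_primitive ((1 + -1) / 2 - 1)) with 48%Z. field.
Qed.
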